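(* Let $b>0$, $d\in\mathbb{N}^*$, and let $(G_n)_{n\ge0}$, $G_n=(V_n,E_n)$, be a $(b,d)$-expander. Let $c\in\,]0,1[$. There is a constant $q_1$, depending only on $d$, and there exists $q_2(c)\in\,]q_1,1[$ such that for any $\alpha\in\,]0,1[$, for all $n$ large enough, $p_{n,\alpha}(c)\in\,]q_1,q_2(c)[$. Furthermore, for any $c\in\,]0,1[$, there are strictly positive constants $C_1$ and $C_2$, depending only on $b$ and $d$, such that for every $n$ and every $p\geq q_2(c)$, \[ \mu_{n,p}\big(L_n^{(1)}\geq c|V_n|\big)\geq 1-C_1e^{-C_2\frac{|V_n|}{\log |V_n|}}. \]
   Context: For a finite graph $G=(V,E)$, $E(A,B)$ is the set of edges with one endpoint in $A$ and the other in $B$, and the Cheeger constant is $c(G)=\min_{A\subset V,\,0<|A|\le |V|/2} |E(A,A^c)|/|A|$. A $(b,d)$-expander is a sequence of finite graphs $G_n=(V_n,E_n)$ such that for every $n$ the maximal degree of $G_n$ is at most $d$ and $c(G_n)>b$, with $|V_n|\to\infty$. Configurations $x\in\{0,1\}^{E_n}$ are identified with the spanning subgraph of $G_n$ keeping exactly the edges $e$ with $x(e)=1$; $\mu_{n,p}$ is the product measure on $\{0,1\}^{E_n}$ under which each $x(e)$ is independently $1$ with probability $p$ and $0$ with probability $1-p$. $L_n^{(1)}(x)$ is the number of vertices of the largest connected component of the configuration $x$. For $c\in]0,1[$ and $\alpha\in[0,1]$, $p_{n,\alpha}(c)$ is the unique $p\in[0,1]$ such that $\mu_{n,p}(L_n^{(1)}\ge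 c|V_n|)=\alpha$. *)

From HB Require Import structures.
From mathcomp Require Import all_boot all_order all_algebra.
From mathcomp Require Import reals constructive_ereal sequences exp.
Set Implicit Arguments. Unset Strict Implicit. Unset Printing Implicit Defensive.
Import Order.TTheory GRing.Theory Num.Theory.
Local Open Scope ring_scope.

Definition is_graph (V : finType) (E : {set {set V}}) : Prop :=
  forall e, e \in E -> #|e| = 2%N.

Definition max_deg_le (V : finType) (E : {set {set V}}) (d : nat) : Prop :=
  forall v : V, (#|[set e in E | v \in e]| <= d)%N.

Definition boundary (V : finType) (E : {set {set V}}) (A : {set V}) : nat :=
  #|[set e in E | (e :&: A != set0) && (e :\: A != set0)]|.

(* Cheeger constant, min over A with 0 < |A| <= |V|/2 (empty min = +oo) *)
Definition cheeger (R : realType) (V : finType) (E : {set {set V}}) : \bar R :=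
  \big[Order.min/+oo%E]_(A : {set V} | (0 < #|A|)%N && (2 * #|A| <= #|V|)%N)
     (((boundary E A)%:R / (#|A|)%:R : R)%:E).
Arguments cheeger R {V} E.

Definition expander (R : realType) (b : R) (d : nat)
  (V : nat -> finType) (E : forall n, {set {set V n}}) : Prop :=
  [/\ forall n, is_graph (E n),
      forall n, max_deg_le (E n) d,
      forall n, (b%:E < cheeger R (E n))%E
    & forall M : nat, exists N : nat, forall n, (N <= n)%N -> (M <= #|V n|)%N].

Definition edge_t (V : finType) (E : {set {set V}}) := {e : {set V} | e \in E}.
Definition config (V : finType) (E : {set {set V}}) := {ffun edge_t E -> bool}.

Definition open_rel (V : finType) (E : {set {set V}}) (x : config E) : rel V :=
  fun u v => [exists e : edge_t E, [&& x e, u \in val e & v \in val e]].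

Definition comp (V : finType) (E : {set {set V}}) (x : config E) (u : V) : {set V} :=
  [set v | connect (open_rel x) u v].

Definition L1 (V : finType) (E : {set {set V}}) (x : config E) : nat :=
  \max_(u : V) #|comp x u|.

Definition mu (R : realType) (V : finType) (E : {set {set V}})
  (A : pred (config E)) (p : R) : R :=
  \sum_(x : config E | A x)
     p ^+ #|[set e | x e]| * (1 - p) ^+ #|[set e | ~~ x e]|.
Arguments mu {R V E} A p.

Definition giant (R : realType) (V : finType) (E : {set {set V}}) (c : R)
  : pred (config E) :=
  fun x => c * (#|V|)%:R <= (L1 x)%:R.
Arguments giant {R V} E c.

Definition is_crit (R : realType) (V : finType) (E : {set {set V}})
  (c alpha p : R) : Prop :=
  0 <= p <= 1 /\ mu (giant E c) p = alpha.
Arguments is_crit {R V} E c alpha p.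
Arguments expander {R} b d {V} E.

(* The probability [mu_p(L1 >= c |V|)] is a polynomial in [p], strictly increasing because
   the event is increasing and non-trivial (couple the configurations at levels [p] and [p']
   through two independent ones); hence the critical value exists, is unique and lies in
   ]q1, q2[ as soon as the probability is below alpha at q1 and above alpha at q2.

   Subcritical side: a component with more than [(d+1)^L] vertices contains a self-avoiding
   open path of length [L]; there are at most [|V| d^L] such paths, each open with probability
   [q^L], which is small at [q1 = (d+1)^-3] for [(d+1)^L] of order [|V|].

   Supercritical side: without a giant component some union [S] of components has size
   between [(1-c)/2 |V|] and [|V|/2]; expansion gives it more than [b |S|] boundary edges,
   all closed. If [1 - p <= 4^-K] with [K b (1-c)/2 >= 1], a union bound over the [2^|V|]
   sets gives probability at most [2^-|V|], below [exp(-(ln 2)^2 |V| / ln |V|)]. *)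

From Pilot Require Import Defs.
From HB Require Import structures.
From mathcomp Require Import all_boot all_order all_algebra.
From mathcomp Require Import reals constructive_ereal sequences exp.
From mathcomp Require Import boolp zify ring lra.
Import Order.TTheory GRing.Theory Num.Theory.
Set Implicit Arguments. Unset Strict Implicit. Unset Printing Implicit Defensive.
Local Open Scope ring_scope.

Section ProductMeasure.
Variables (R : realType) (V : finType) (E : {set {set V}}).
Implicit Types (A B : pred (config E)) (p : R).

Definition bern p (b : bool) : R := if b then p else 1 - p.

Lemma muE A p : mu A p = \sum_(x | A x) \prod_(e : edge_t E) bern p (x e).
Proof.
apply: eq_bigr => x _; rewrite (bigID (fun e => x e)) /=; symmetry.
rewrite (eq_bigr (fun=> p)); last by move=> e ->.
rewrite [X in _ * X](eq_bigr (fun=> 1 - p)); last by move=> e /negbTE ->.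
by rewrite !prodr_const !cardsE.
Qed.

Lemma bern_ge0 p b : 0 <= p <= 1 -> 0 <= bern p b.
Proof. by case: b => /andP[p0 p1] /=; lra. Qed.

Lemma mu_ge0 A p : 0 <= p <= 1 -> 0 <= mu A p.
Proof.
by move=> hp; rewrite muE; apply: sumr_ge0 => x _; apply: prodr_ge0 => e _; apply: bern_ge0.
Qed.

Lemma le_mu A B p : 0 <= p <= 1 -> (forall x, A x -> B x) -> mu A p <= mu B p.
Proof.
move=> hp hAB; rewrite /mu [X in _ <= X](bigID A) /=.
rewrite [X in _ <= X + _](eq_bigl A) => [|x]; last first.
  by case Ax: (A x); rewrite ?andbF ?andbT ?hAB.
by rewrite lerDl -/(mu _ p) mu_ge0.
Qed.

Lemma mu_le_sum (I : finType) (P : pred I) (B : I -> pred (config E)) A p :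
  0 <= p <= 1 -> (forall x, A x -> exists2 i, P i & B i x) ->
  mu A p <= \sum_(i | P i) mu (B i) p.
Proof.
move=> hp hA; rewrite /mu.
under [X in _ <= X]eq_bigr => i _ do rewrite big_mkcond.
rewrite exchange_big /= [X in X <= _]big_mkcond; apply: ler_sum => x _.
have w0 : 0 <= p ^+ #|[set e | x e]| * (1 - p) ^+ #|[set e | ~~ x e]|.
  by have := mu_ge0 (pred1 x) hp; rewrite /mu big_pred1_eq.
case: ifP => Ax; last by apply: sumr_ge0 => i _; case: ifP.
have [i Pi Bi] := hA x Ax; rewrite (bigD1 i) //= Bi lerDl.
by apply: sumr_ge0 => j _; case: ifP.
Qed.

Lemma mu_forall_eq (F : {set edge_t E}) (b : bool) p :
  mu (fun x => [forall e in F, x e == b]) p = bern p b ^+ #|F|.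
Proof.
pose Q e j := (e \in F) ==> (j == b).
rewrite muE (eq_bigl (fun x => x \in family Q)) => [|x]; last first.
  apply/forall_inP/familyP => H e; rewrite unfold_in /Q.
    by apply/implyP; apply: H.
  by move=> eF; have := H e; rewrite unfold_in /Q => /implyP; apply.
transitivity (\prod_e \sum_(j | Q e j) bern p j); first exact/esym/bigA_distr_big_dep.
rewrite (bigID (mem F)) /= [X in _ * X]big1 => [|e /negbTE eF].
  rewrite mulr1 -prodr_const; apply: eq_bigr => e eF.
  by rewrite (eq_bigl (pred1 b)) ?big_pred1_eq // => j; rewrite /Q eF.
by rewrite (eq_bigl predT) ?big_bool /= => [|j]; [ring | rewrite /Q eF].
Qed.

Lemma mu_predT p : mu (fun _ : config E => true) p = 1.
Proof.
have := mu_forall_eq set0 true p; rewrite cards0 expr0 => <-.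
by apply: eq_bigl => x; apply/esym/forall_inP => e; rewrite inE.
Qed.

Lemma mu_predC A p : mu (predC A) p = 1 - mu A p.
Proof.
by rewrite -(mu_predT p) [X in _ = X - _](bigID A) /= addrC addrK.
Qed.

Definition increasing A := forall x y : config E, (forall e, x e -> y e) -> A x -> A y.

Local Notation pair_config := {ffun edge_t E -> bool * bool}.

Definition pair_weight p s (g : pair_config) : R :=
  \prod_e (bern p (g e).1 * bern s (g e).2).

Lemma mu_coupling p s (phi : bool * bool -> bool) r A :
  (forall b, \sum_(j | phi j == b) bern p j.1 * bern s j.2 = bern r b) ->
  mu A r = \sum_(g : pair_config | A [ffun e => phi (g e)]) pair_weight p s g.
Proof.
move=> marg; rewrite muE [RHS](partition_big (fun g : pair_config =>
  [ffun e => phi (g e)]) A) //=.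
apply: eq_bigr => z Az; rewrite (eq_bigl (fun g => g \in family (fun e j => phi j == z e))).
  transitivity (\prod_e \sum_(j | phi j == z e) bern p j.1 * bern s j.2).
    by apply: eq_bigr => e _; rewrite marg.
  exact: bigA_distr_big_dep.
move=> g; apply/andP/familyP => [[_ /eqP <-] e|H]; first by rewrite unfold_in ffunE.
suff -> : [ffun e => phi (g e)] = z by rewrite Az eqxx.
by apply/ffunP => e; rewrite ffunE; apply/eqP; have := H e; rewrite unfold_in.
Qed.
Lemma sum_bool_pair (F : bool * bool -> R) :
  \sum_j F j = F (true, true) + F (true, false) + F (false, true) + F (false, false).
Proof.
rewrite (eq_bigr (fun j => F (j.1, j.2))) => [|[]//].
by rewrite -(pair_bigA _ (fun i k => F (i, k))) /= !big_bool /= addrA.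
Qed.

Lemma mu_lt_increasing A p p' : increasing A -> A [ffun=> true] -> ~~ A [ffun=> false] ->
  0 <= p -> p < p' -> p' <= 1 -> mu A p < mu A p'.
Proof.
move=> incA At Af p0 pp' p'1.
have p1 : 1 - p != 0 by rewrite subr_eq0; apply/eqP => p_eq1; lra.
pose s := (p' - p) / (1 - p).
have s0 : 0 < s by rewrite divr_gt0 //; lra.
have s1 : s <= 1 by rewrite ler_pdivrMr; lra.
(* An edge open at level p' is an edge open at level p or, independently, at level s. *)
have marg_p b : \sum_(j | j.1 == b) bern p j.1 * bern s j.2 = bern p b.
  by rewrite big_mkcond sum_bool_pair; case: b; rewrite /bern /=; ring.
have marg_p' b : \sum_(j | (j.1 || j.2) == b) bern p j.1 * bern s j.2 = bern p' b.
  by rewrite big_mkcond sum_bool_pair; case: b; rewrite /bern /s /=; field.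
rewrite (mu_coupling A marg_p) (mu_coupling A marg_p').
rewrite [X in _ < X](bigID (fun g : pair_config => A [ffun e => (g e).1])) /=.
rewrite [X in _ < X + _](eq_bigl (fun g : pair_config => A [ffun e => (g e).1])); last first.
  move=> g; case Ag: (A [ffun e => (g e).1]); rewrite ?andbF ?andbT //.
  by apply: incA Ag => e; rewrite !ffunE => ->.
have weight_ge0 (g : pair_config) : 0 <= pair_weight p s g.
  by apply: prodr_ge0 => e _; apply: mulr_ge0; apply: bern_ge0; lra.
(* Closed at level p and open at level s everywhere: open at p' but not at p. *)
rewrite ltrDl (bigD1 ([ffun=> (false, true)] : pair_config)) /=; last first.
  rewrite (_ : [ffun e => _] = [ffun=> true]) ?At; last by apply/ffunP => e; rewrite !ffunE.
  by rewrite (_ : [ffun e => _] = [ffun=> false]) ?Af //; apply/ffunP => e; rewrite !ffunE.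
apply: ltr_pwDl; last by apply: sumr_ge0 => g _.
by apply: prodr_gt0 => e _; rewrite ffunE /bern /=; apply: mulr_gt0; lra.
Qed.
End ProductMeasure.

Section Components.
Variables (R : realType) (V : finType) (E : {set {set V}}) (x : config E).
Local Notation n := #|V|.
Local Notation open := (open_rel x).

Lemma open_rel_sym : symmetric open.
Proof.
by move=> u v; apply/existsP/existsP => -[e /and3P[xe ue ve]]; exists e; rewrite xe ue ve.
Qed.

Lemma closed_comp u : closed open (Defs.comp x u).
Proof.
move=> a b hab; rewrite !inE.
exact: (connect_closed (sym_connect_sym open_rel_sym) u hab).
Qed.

Lemma closed_setU (S T : {set V}) : closed open S -> closed open T -> closed open (S :|: T).
Proof. by move=> cS cT a b hab; rewrite !inE (cS _ _ hab) (cT _ _ hab). Qed.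

Lemma closed_setC (S : {set V}) : closed open S -> closed open (~: S).
Proof. by move=> cS a b hab; rewrite !inE (cS _ _ hab). Qed.

Lemma card_comp_le_L1 u : (#|Defs.comp x u| <= L1 x)%N.
Proof. exact: (leq_bigmax (F := fun u => #|Defs.comp x u|)). Qed.

(* A maximal union of components below (1 + c)/2 n cannot be below (1 - c)/2 n,
   since any further component, of size < c n, could be added to it. *)
Lemma exists_closed_between (c : R) : 0 < c ->
  (forall u, #|Defs.comp x u|%:R < c * n%:R) -> exists S : {set V},
    [/\ closed open S, (1 - c) / 2 * n%:R <= #|S|%:R & #|S|%:R <= (1 + c) / 2 * n%:R].
Proof.
move=> c0 small.
pose P (S : {set V}) := `[< closed open S >] && (#|S|%:R <= (1 + c) / 2 * n%:R).
have P0 : P set0.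
  rewrite /P cards0 mulr_ge0 ?divr_ge0 ?andbT //; last lra.
  by apply/asboolP => a b _; rewrite !inE.
case: (@arg_maxnP _ set0 P (fun S => #|S|) P0) => S /andP[/asboolP clS leS] maxS.
exists S; split => //; rewrite leNgt; apply/negP => ltS.
have /card_gt0P [u] : (0 < #|~: S|)%N.
  rewrite cardsCs setCK subn_gt0 -(ltr_nat R); apply: lt_le_trans ltS _.
  by rewrite ler_piMl //; lra.
rewrite inE => uS.
have disj : [disjoint S & Defs.comp x u].
  apply/pred0P => v /=; apply/negP => /andP[vS]; rewrite inE => cuv.
  by move: uS; rewrite (closed_connect clS cuv) vS.
have cardU : #|S :|: Defs.comp x u| = (#|S| + #|Defs.comp x u|)%N.
  by rewrite cardsU (disjoint_setI0 disj) cards0 subn0.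
have : P (S :|: Defs.comp x u).
  apply/andP; split; first by apply/asboolP/closed_setU => //; apply: closed_comp.
  rewrite cardU natrD; apply/ltW/(lt_le_trans (ltrD ltS (small u))).
  by rewrite -mulrDl ler_wpM2r //; lra.
move/maxS; rewrite cardU; suff : (0 < #|Defs.comp x u|)%N by lia.
by apply/card_gt0P; exists u; rewrite inE connect0.
Qed.

Lemma exists_balanced_closed (c : R) : 0 < c < 1 -> ((L1 x)%:R < c * n%:R) ->
  exists S : {set V},
    [/\ closed open S, (1 - c) / 2 * n%:R <= #|S|%:R & (2 * #|S| <= n)%N].
Proof.
move=> /andP[c0 c1] ltL.
have small u : #|Defs.comp x u|%:R < c * n%:R.
  by apply: le_lt_trans ltL; rewrite ler_nat card_comp_le_L1.
have [S [clS geS leS]] := exists_closed_between c0 small.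
have [S_half|S_big] := leqP (2 * #|S|) n; first by exists S.
exists (~: S); split; first exact: closed_setC.
  rewrite cardsCs setCK natrB ?max_card // lerBrDr; apply: le_trans (lerD (lexx _) leS) _.
  by rewrite -mulrDl ler_piMl //; lra.
by rewrite cardsCs setCK; move: S_big (max_card S); lia.
Qed.
End Components.

Section Supercritical.
Variables (R : realType) (V : finType) (E : {set {set V}}).
Local Notation n := #|V|.
Implicit Types S : {set V}.

Definition boundary_edges (S : {set V}) : {set edge_t E} :=
  [set e | (val e :&: S != set0) && (val e :\: S != set0)].

Lemma card_boundary_edges S : #|boundary_edges S| = boundary E S.
Proof.
rewrite /boundary -(card_imset _ val_inj); apply: eq_card => e.
rewrite [RHS]inE; apply/imsetP/idP => [[e' ] | /andP[eE he]].
  by rewrite inE => he ->; rewrite (valP e') he.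
by exists (exist _ e eE); rewrite ?inE.
Qed.

Lemma closed_boundary_shut (x : config E) S : closed (open_rel x) S ->
  [forall e in boundary_edges S, x e == false].
Proof.
move=> clS; apply/forall_inP => e; rewrite inE => /andP[].
move=> /set0Pn [u]; rewrite inE => /andP[ue uS] /set0Pn [v]; rewrite inE => /andP[vS ve].
apply/eqP/negbTE/negP => xe.
have /clS : open_rel x u v by apply/existsP; exists e; rewrite xe ue ve.
by rewrite uS (negbTE vS).
Qed.

Lemma cheeger_boundary_gt (b : R) S : (b%:E < cheeger R E)%E -> (0 < #|S|)%N ->
  (2 * #|S| <= n)%N -> b * #|S|%:R < (boundary E S)%:R.
Proof.
move=> hb S0 S2.
have := @bigmin_le_cond _ _ _ +oo%E S (fun A => (0 < #|A|)%N && (2 * #|A| <= n)%N)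
  (fun A => ((boundary E A)%:R / #|A|%:R : R)%:E).
rewrite S0 S2 => /(_ isT) /(lt_le_trans hb).
by rewrite lte_fin ltr_pdivlMr ?ltr0n.
Qed.

Lemma mu_not_giant_le_sum (c p : R) : 0 < c < 1 -> 0 <= p <= 1 ->
  mu (predC (giant E c)) p <=
  \sum_(S : {set V} | [&& (0 < #|S|)%N, (2 * #|S| <= n)%N & (1 - c) / 2 * n%:R <= #|S|%:R])
     (1 - p) ^+ boundary E S.
Proof.
move=> hc hp; under eq_bigr => S _ do
  rewrite -card_boundary_edges -[1 - p]/(bern p false) -mu_forall_eq.
apply: mu_le_sum => // x; rewrite /= /giant -ltNge => ltL.
have [S [clS geS leS]] := exists_balanced_closed hc ltL.
exists S; last exact: closed_boundary_shut.
rewrite leS geS !andbT -(ltr0n R); apply: lt_le_trans geS.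
case/andP: hc => c0 c1.
have n0 : 0 < n%:R :> R by rewrite -(pmulr_rgt0 _ c0); apply: le_lt_trans ltL.
by rewrite mulr_gt0 // divr_gt0 //; lra.
Qed.

Lemma mu_giant_supercritical (b c p : R) (K : nat) :
  (b%:E < cheeger R E)%E -> 0 < b -> 0 < c < 1 ->
  1 <= K%:R * (b * ((1 - c) / 2)) -> 1 - 4^-1 ^+ K <= p <= 1 ->
  1 - 2^-1 ^+ n <= mu (giant E c) p.
Proof.
move=> hb b0 hc hK /andP[pK p1].
have q0 : 0 <= 4^-1 ^+ K :> R by rewrite exprn_ge0 // invr_ge0.
have q1 : 4^-1 ^+ K <= 1 :> R by rewrite exprn_ile1 // ?invr_ge0 ?invf_le1 //; lra.
have hp : 0 <= p <= 1 by apply/andP; split; lra.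
rewrite lerBlDr -lerBlDl -mu_predC.
apply: le_trans (mu_not_giant_le_sum hc hp) _.
apply: (@le_trans _ _ (\sum_(S : {set V}) 4^-1 ^+ n)); last first.
  have := card_powerset [set: V]; rewrite powersetT !cardsT sumr_const => ->.
  rewrite -[X in X <= _]mulr_natr natrX -exprMn.
  by rewrite (_ : 4^-1 * 2%:R = 2^-1 :> R) //; field.
rewrite [X in _ <= X](bigID (fun S : {set V} => [&& (0 < #|S|)%N, (2 * #|S| <= n)%N
   & (1 - c) / 2 * n%:R <= #|S|%:R])) /= -[X in X <= _]addr0.
apply: lerD; last by apply: sumr_ge0 => S _; rewrite exprn_ge0 // invr_ge0.
apply: ler_sum => S /and3P[S0 S2 geS].
(* Then [(1 - p) ^ |dS| <= 4 ^ (- K |dS|) <= 4 ^ (- |V|)]. *)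
have nK : (n <= K * boundary E S)%N.
  rewrite -(ler_nat R) natrM; apply: le_trans (_ : K%:R * (b * ((1 - c) / 2)) * n%:R <= _).
    by rewrite ler_peMl.
  rewrite -mulrA ler_wpM2l // -mulrA; apply/ltW/(le_lt_trans _ (cheeger_boundary_gt hb S0 S2)).
  by rewrite ler_wpM2l // ltW.
apply: (@le_trans _ _ ((4^-1 ^+ K) ^+ boundary E S)).
  by apply: lerXn2r; rewrite ?nnegrE //; lra.
by rewrite -exprM ler_wiXn2l // ?invr_ge0 ?invf_le1 //; lra.
Qed.
End Supercritical.

Lemma card_paths (T : finType) (r : rel T) (k L : nat) (u : T) :
  (forall w, #|[set v | r w v]| <= k)%N -> (#|[set t : L.-tuple T | path r u t]| <= k ^ L)%N.
Proof.
move=> deg; elim: L u => [|L IH] u.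
  by rewrite expn0; apply: leq_trans (max_card _) _; rewrite card_tuple.
rewrite -sum1_card (reindex (fun p : T * L.-tuple T => cons_tuple p.1 p.2)) /=; last first.
  exists (fun t : L.+1.-tuple T => (thead t, behead_tuple t)) => [[v t] _ | t _].
    by congr pair; apply: val_inj.
  by apply: val_inj => /=; rewrite [in RHS](tuple_eta t).
under eq_bigl => p do rewrite inE /=.
rewrite -(pair_big_dep (r u) (fun v (t : L.-tuple T) => path r v t) (fun _ _ => 1%N)) /= expnS.
apply: leq_trans (_ : \sum_(v | r u v) k ^ L <= _)%N.
  by apply: leq_sum => v _; have := IH v; rewrite -sum1_card; under eq_bigl => t do rewrite inE.
by rewrite sum_nat_const leq_mul //; have := deg u; rewrite cardsE.
Qed.

Section Subcritical.
Variables (R : realType) (V : finType) (E : {set {set V}}) (d : nat).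
Hypotheses (graphE : is_graph E) (degE : max_deg_le E d).
Local Notation n := #|V|.

Definition adjacent (u v : V) := (u != v) && ([set u; v] \in E).

Lemma open_edge (x : config E) u v : open_rel x u v -> u != v ->
  exists2 e : edge_t E, val e = [set u; v] & x e.
Proof.
move=> /existsP [e /and3P[xe ue ve]] uv; exists e => //; apply/eqP.
rewrite eq_sym eqEcard (graphE (valP e)) cards2 uv andbT.
by apply/subsetP => w; rewrite !inE => /orP[] /eqP ->.
Qed.

Lemma open_adjacent (x : config E) u v : open_rel x u v -> u != v -> adjacent u v.
Proof.
by move=> ouv uv; have [e ve _] := open_edge ouv uv; rewrite /adjacent uv -ve (valP e).
Qed.

Lemma card_adjacent u : (#|[set v | adjacent u v]| <= d)%N.
Proof.
have inj : {in [set v | adjacent u v] &, injective (fun v => [set u; v])}.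
  move=> v w; rewrite !inE => /andP[uv _] _ uv_uw.
  have : v \in [set u; w] by rewrite -uv_uw !inE eqxx orbT.
  by rewrite !inE eq_sym (negbTE uv) => /eqP.
rewrite -(card_in_imset inj); apply: leq_trans (degE u); apply: subset_leq_card.
apply/subsetP => e /imsetP [v]; rewrite !inE => /andP[_ vE] ->.
by rewrite vE !inE eqxx.
Qed.

Definition stay_or_open (x : config E) : rel V := [rel a b | (a == b) || open_rel x a b].

Lemma card_stay_or_open x w : (#|[set v | stay_or_open x w v]| <= d.+1)%N.
Proof.
apply: leq_trans (_ : #|w |: [set v | adjacent w v]| <= _)%N.
  apply/subset_leq_card/subsetP => v; rewrite !inE /= => /orP[/eqP -> | wv].
    by rewrite eqxx.
  by case: eqVneq => //= vw; apply: open_adjacent wv _; rewrite eq_sym.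
by rewrite cardsU1; have := card_adjacent w; case: (w \notin _); lia.
Qed.

(* Every vertex at open distance at most [L] from [u] is the endpoint of an
   [L]-step walk that may pause. *)
Definition ball (x : config E) u L : {set V} :=
  [set last u (val t) | t in [set t : L.-tuple V | path (stay_or_open x) u t]].

Lemma card_ball x u L : (#|ball x u L| <= d.+1 ^ L)%N.
Proof. exact: leq_trans (leq_imset_card _ _) (card_paths _ _ (card_stay_or_open x)). Qed.

Lemma exists_long_open_path (x : config E) u L : (d.+1 ^ L < #|Defs.comp x u|)%N ->
  exists t : seq V, [/\ size t = L, uniq (u :: t) & path (open_rel x) u t].
Proof.
move=> big_comp.
have /subsetPn [v] : ~~ (Defs.comp x u \subset ball x u L).
  by apply: contraTN big_comp => /subset_leq_card sub; rewrite -leqNgt (leq_trans sub) ?card_ball.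
rewrite inE => /connectP [p0 /shortenP [p pth uq _] ->] {p0} notin_ball.
have long : (L < size p)%N.
  rewrite ltnNge; apply: contra notin_ball => short.
  have padded : size (p ++ nseq (L - size p) (last u p)) == L by rewrite size_cat size_nseq; lia.
  apply/imsetP; exists (Tuple padded); last first.
    by rewrite /= last_cat; elim: (L - size p)%N.
  rewrite inE /= cat_path (sub_path _ pth) => [|a b ab]; last by apply/orP; right.
  by elim: (L - size p)%N => //= k ->; rewrite andbT; apply/orP; left.
exists (take L p); split; first by rewrite size_take long.
  exact: (take_uniq L.+1 uq).
exact: take_path.
Qed.

Local Notation path_edges := (pairmap (fun a b : V => [set a; b])).

Lemma mem_path_edges u t e w : e \in path_edges u t -> w \in e -> w \in u :: t.
Proof.
elim: t u => //= v t IH u; rewrite inE => /orP[/eqP -> | /IH vt_w /vt_w wvt].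
  by rewrite !inE => /orP[] ->; rewrite ?orbT.
by rewrite in_cons wvt orbT.
Qed.

Lemma uniq_path_edges u t : uniq (u :: t) -> uniq (path_edges u t).
Proof.
elim: t u => //= v t IH u /andP[u_vt uq]; rewrite IH // andbT.
by apply: contra u_vt => /mem_path_edges; apply; rewrite setU11.
Qed.

Lemma adjacent_path_edges u t e : path adjacent u t -> e \in path_edges u t -> e \in E.
Proof.
elim: t u => //= v t IH u /andP[/andP[_ uvE] adj]; rewrite inE => /orP[/eqP -> //|].
exact: IH.
Qed.

Lemma open_path_edges (x : config E) u t e : uniq (u :: t) -> path (open_rel x) u t ->
  e \in path_edges u t -> exists2 ee : edge_t E, val ee = e & x ee.
Proof.
elim: t u => //= v t IH u /andP[u_vt uq] /andP[uv opath]; rewrite inE => /orP[/eqP -> |].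
  by apply: open_edge uv _; apply: contraNneq u_vt => ->; rewrite mem_head.
exact: IH.
Qed.

Lemma open_path_adjacent (x : config E) u t : uniq (u :: t) -> path (open_rel x) u t ->
  path adjacent u t.
Proof.
elim: t u => //= v t IH u /andP[u_vt uq] /andP[uv opath]; rewrite IH // andbT.
by apply: open_adjacent uv _; apply: contraNneq u_vt => ->; rewrite mem_head.
Qed.

Lemma mu_open_path (q : R) u t : 0 <= q <= 1 -> uniq (u :: t) -> path adjacent u t ->
  mu (fun x : config E => path (open_rel x) u t) q <= q ^+ size t.
Proof.
move=> hq uq adj; pose F := [set ee : edge_t E | val ee \in path_edges u t].
have <- : #|F| = size t.
  rewrite -(card_imset _ val_inj) -(size_pairmap (fun a b : V => [set a; b]) u t).
  rewrite -(card_uniqP (uniq_path_edges uq)); apply: eq_card => e.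
  apply/imsetP/idP => [[ee] | et]; first by rewrite inE => ? ->.
  by exists (exist _ e (adjacent_path_edges adj et)); rewrite ?inE.
rewrite -[q in q ^+ _]/(bern q true) -mu_forall_eq; apply: le_mu => // x opath.
apply/forall_inP => ee; rewrite inE => /(open_path_edges uq opath) [ee' /val_inj ->].
by move=> ->.
Qed.

Lemma mu_giant_subcritical (c q : R) L : 0 <= q <= 1 -> (d.+1 ^ L)%:R < c * n%:R ->
  mu (giant E c) q <= n%:R * (d%:R * q) ^+ L.
Proof.
move=> hq hL; have q0 : 0 <= q by case/andP: hq.
pose P (ut : V * L.-tuple V) := uniq (ut.1 :: ut.2) && path adjacent ut.1 ut.2.
apply: le_trans (mu_le_sum (P := P) (B := fun ut x => path (open_rel x) ut.1 ut.2) hq _) _.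
  move=> x; rewrite /giant => giant_x.
  have [u big_u] : exists u, (d.+1 ^ L < #|Defs.comp x u|)%N.
    case: (pickP (fun u => d.+1 ^ L < #|Defs.comp x u|)%N) => [u ? | small]; first by exists u.
    have : (L1 x <= d.+1 ^ L)%N by apply/bigmax_leqP => u _; rewrite leqNgt small.
    by rewrite -(ler_nat R) => /(le_trans giant_x) /(lt_le_trans hL); rewrite ltxx.
  have [t [st uq opath]] := exists_long_open_path big_u.
  have st' : size t == L by rewrite st.
  exists (u, Tuple st') => //.
  by apply/andP; split => //; apply: open_path_adjacent uq opath.
apply: le_trans (_ : \sum_(ut | P ut) q ^+ L <= _).
  by apply: ler_sum => -[u t] /andP[/= uq adj]; rewrite -{2}(size_tuple t) mu_open_path.
apply: le_trans (_ : \sum_(ut : V * L.-tuple V | path adjacent ut.1 ut.2) q ^+ L <= _).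
  rewrite [X in X <= _]big_mkcond [X in _ <= X]big_mkcond; apply: ler_sum => -[u t] _ /=.
  rewrite /P /=; case: (path adjacent u t); rewrite ?andbF ?andbT //.
  by case: ifP; rewrite ?exprn_ge0.
rewrite -(pair_big_dep predT (fun u (t : L.-tuple V) => path adjacent u t) (fun _ _ => q ^+ L)) /=.
apply: le_trans (_ : \sum_(u : V) (d ^ L)%:R * q ^+ L <= _).
  apply: ler_sum => u _; rewrite sumr_const -[X in X <= _]mulr_natl.
  rewrite ler_wpM2r ?exprn_ge0 // ler_nat.
  by have := card_paths L u card_adjacent; rewrite cardsE.
by rewrite sumr_const -[X in X <= _]mulr_natl natrX exprMn mulrC.
Qed.
End Subcritical.

Lemma exists_pow_between (D m k : nat) : (1 < D)%N -> (0 < m <= k)%N ->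
  exists L, (D ^ L * m <= k < D ^ L.+1 * m)%N.
Proof.
move=> D1 /andP[m0 mk]; have km0 : (0 < k %/ m)%N by rewrite divn_gt0.
exists (trunc_log D (k %/ m)); apply/andP; split.
  by apply: leq_trans (leq_divM k m); rewrite leq_mul2r trunc_logP ?orbT.
by apply: leq_trans (ltn_ceil k m0) _; rewrite leq_mul2r trunc_log_ltn ?orbT.
Qed.

Section SubcriticalRegime.
Variables (R : realType) (d : nat).
Hypothesis d0 : (0 < d)%N.
Local Notation D := d.+1.

(* Take [L] with [D ^ L m <= |V| < D ^ L.+1 m], where [c m > 1]: then [D ^ L < c |V|],
   while [|V| (d q1) ^ L <= |V| / D ^ (2 L) < (D m) ^ 2 / |V|]. *)
Lemma mu_giant_subcritical_small (c al : R) : 0 < c -> 0 < al ->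
  exists M : nat, forall (V : finType) (E : {set {set V}}), is_graph E -> max_deg_le E d ->
    (M <= #|V|)%N -> mu (giant E c) (D ^ 3)%:R^-1 < al.
Proof.
move=> c0 al0; pose m := Num.Def.archi_bound c^-1.
pose M := Num.Def.archi_bound ((D * m)%:R ^+ 2 / al).
have cm : 1 < c * m%:R.
  have cinv : 0 <= c^-1 by rewrite invr_ge0 ltW.
  by have := archi_boundP cinv; rewrite -[X in X < _]div1r ltr_pdivrMr // mulrC.
have m0 : (0 < m)%N by rewrite lt0n; apply: contraTneq cm => ->; rewrite mulr0n mulr0 ltr10.
exists (maxn m M) => V E graphE degE; rewrite geq_max => /andP[mn Mn].
set n := #|V| in mn Mn *.
have [L /andP[low high]] := @exists_pow_between D m n d0 (introT andP (conj m0 mn)).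
have A0 : 0 < (D ^ L)%:R :> R by rewrite ltr0n expn_gt0.
have n0 : 0 < n%:R :> R by rewrite ltr0n (leq_trans m0).
have q1_01 : 0 <= ((D ^ 3)%:R^-1 : R) <= 1.
  by rewrite invr_ge0 ler0n invf_le1 ?ler1n ?ltr0n ?expn_gt0.
have no_big_comp : (D ^ L)%:R < c * n%:R.
  apply: lt_le_trans (_ : c * ((D ^ L)%:R * m%:R) <= _); last first.
    by rewrite -natrM ler_wpM2l ?ler_nat ?ltW.
  by rewrite mulrCA ltr_pMr.
apply: le_lt_trans (mu_giant_subcritical graphE degE q1_01 no_big_comp) _.
have q1_le : d%:R * (D ^ 3)%:R^-1 <= ((D ^ 2)%:R^-1 : R).
  apply: le_trans (_ : D%:R * (D ^ 3)%:R^-1 <= _); first by rewrite ler_wpM2r ?invr_ge0 ?ler_nat.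
  by rewrite (expnS D 2) natrM invfM mulrA mulfV ?mul1r // pnatr_eq0.
apply: (le_lt_trans (_ : _ <= n%:R * ((D ^ L)%:R ^+ 2)^-1)).
  have -> : ((D ^ L)%:R ^+ 2)^-1 = ((D ^ 2)%:R^-1 : R) ^+ L.
    by rewrite exprVn -!natrX -!expnM mulnC.
  rewrite ler_wpM2l //.
  by apply: lerXn2r; rewrite ?nnegrE ?mulr_ge0 ?invr_ge0.
have nY : n%:R < (D ^ L)%:R * (D * m)%:R :> R by rewrite -natrM mulnA -expnSr ltr_nat.
have Yn : (D * m)%:R ^+ 2 < al * n%:R.
  rewrite -ltr_pdivrMl // mulrC; apply: lt_le_trans (archi_boundP _) _.
    by rewrite divr_ge0 ?exprn_ge0 // ltW.
  by rewrite ler_nat.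
rewrite ltr_pdivrMr ?exprn_gt0 // -(ltr_pM2l n0); nra.
Qed.
End SubcriticalRegime.

Lemma giant_increasing (R : realType) (V : finType) (E : {set {set V}}) (c : R) :
  increasing (giant E c).
Proof.
move=> x y xy; rewrite /giant => /le_trans; apply; rewrite ler_nat.
apply/bigmax_leqP => u _; apply: leq_trans (card_comp_le_L1 y u).
apply/subset_leq_card/subsetP => v; rewrite !inE; apply: connect_sub => a b.
case/existsP => e /and3P[xe ae be]; apply/connect1/existsP; exists e.
by rewrite (xy _ xe) ae be.
Qed.

Section Crit.
Variables (R : realType) (V : finType) (E : {set {set V}}).
Implicit Types (A : pred (config E)) (p : R).

Definition mu_poly A : {poly R} :=
  \sum_(x | A x) \prod_(e : edge_t E) (if x e then 'X else 1 - 'X).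

Lemma mu_polyE A p : (mu_poly A).[p] = mu A p.
Proof.
rewrite muE horner_sum; apply: eq_bigr => x _; rewrite horner_prod.
by apply: eq_bigr => e _; case: (x e); rewrite !hornerE.
Qed.

Lemma exists_unique_crit A (q1 q2 al : R) : increasing A -> 0 <= q1 -> q1 <= q2 -> q2 <= 1 ->
  mu A q1 < al < mu A q2 ->
  exists p, (0 <= p <= 1 /\ mu A p = al)
    /\ (forall p', 0 <= p' <= 1 /\ mu A p' = al -> p' = p) /\ q1 < p < q2.
Proof.
move=> incA q1_0 q12 q2_1 /andP[lt1 lt2].
have At : A [ffun=> true].
  apply/negPn/negP => nAt; suff mu0 p : mu A p = 0 by move: lt1 lt2; rewrite !mu0; lra.
  rewrite /mu big_pred0 // => x; apply/negbTE; apply: contra nAt.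
  by apply: incA => e; rewrite ffunE.
have Af : ~~ A [ffun=> false].
  apply/negP => Af; suff mu1 p : mu A p = 1 by move: lt1 lt2; rewrite !mu1; lra.
  by rewrite -(@mu_predT _ _ E p); apply: eq_bigl => x; apply: incA Af => e; rewrite ffunE.
have [p /andP[q1p pq2] root_p] : exists2 p, q1 <= p <= q2 & root (mu_poly A - al%:P) p.
  by apply: poly_ivt => //; rewrite !hornerE !mu_polyE subr_le0 subr_ge0 !ltW.
have mu_p : mu A p = al by move: root_p; rewrite /root !hornerE mu_polyE subr_eq0 => /eqP.
have p0 : 0 <= p by apply: le_trans q1p.
have p1 : p <= 1 by apply: le_trans q2_1.
exists p; split; first by rewrite p0 p1.
split.
  move=> p' [/andP[p'0 p'1] mu_p']; case: (ltgtP p' p) => // lt.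
    by have := mu_lt_increasing incA At Af p'0 lt p1; rewrite mu_p mu_p' ltxx.
  by have := mu_lt_increasing incA At Af p0 lt p'1; rewrite mu_p mu_p' ltxx.
rewrite !lt_neqAle q1p pq2 !andbT; apply/andP; split.
  by apply: contraTneq lt1 => ->; rewrite mu_p ltxx.
by apply: contraTneq lt2 => <-; rewrite mu_p ltxx.
Qed.
End Crit.

Section Constants.
Variable R : realType.

Lemma half_pow_le_expR (n : nat) :
  2^-1 ^+ n <= expR (- ln 2 ^+ 2 * (n%:R / ln n%:R)) :> R.
Proof.
case: n => [|[|n]]; first by rewrite expr0 mul0r mulr0 expR0.
  by rewrite ln1 invr0 !mulr0 expR0 expr1 invf_le1 //; lra.
set N : R := n.+2%:R; have ln2_0 : 0 < ln (2 : R) by rewrite ln_gt0 //; lra.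
have ln2_N : ln 2 <= ln N by rewrite ler_ln ?posrE ?ltr0n // ler_nat.
have -> : 2^-1 ^+ n.+2 = expR (- (ln 2 * N)) :> R.
  by rewrite mulr_natr -lnXn ?expRN ?lnK ?posrE ?exprn_gt0 // exprVn; lra.
rewrite ler_expR mulNr lerN2 expr2 -mulrA ler_pM2l // mulrCA ler_piMr ?ler0n //.
by rewrite ler_pdivrMr ?mul1r // (lt_le_trans ln2_0).
Qed.

Lemma exists_half_pow_lt (e : R) : 0 < e ->
  exists M : nat, forall k, (M <= k)%N -> 2^-1 ^+ k < e.
Proof.
move=> e0; exists (Num.Def.archi_bound e^-1) => k Mk.
rewrite -(invrK e) exprVn ltf_pV2 ?posrE ?exprn_gt0 ?invr_gt0 //.
apply: lt_le_trans (archi_boundP _) _; first by rewrite invr_ge0 ltW.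
by rewrite -natrX ler_nat (leq_trans Mk) // ltnW // ltn_expl.
Qed.

Lemma exists_supercritical_level (beta : R) : 0 < beta ->
  exists K : nat, 1 <= K%:R * beta /\ (2^-1 : R) < 1 - 4^-1 ^+ K < (1 : R).
Proof.
move=> beta0; have beta_inv : 0 <= beta^-1 by rewrite invr_ge0 ltW.
set K := Num.Def.archi_bound beta^-1; have := archi_boundP beta_inv.
rewrite -/K -[X in X < _]div1r ltr_pdivrMr // => K_ge; exists K; split; first exact: ltW.
have K0 : (0 < K)%N by rewrite -(ltr0n R) -(pmulr_lgt0 _ beta0) (lt_trans ltr01).
have quarter_pos : 0 < 4^-1 ^+ K :> R by rewrite exprn_gt0 // invr_gt0.
suff : 4^-1 ^+ K <= 4^-1 :> R by lra.
by rewrite -[X in _ <= X]expr1 ler_wiXn2l // ?invr_ge0 ?invf_le1 //; lra.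
Qed.
End Constants.

Unset Implicit Arguments.

Theorem proposition3p1 (R : realType) (d : nat) (hd : (0 < d)%N) :
  exists q1 : R, 0 < q1 /\
  forall b : R, 0 < b ->
  exists C1 C2 : R, 0 < C1 /\ 0 < C2 /\
  forall (V : nat -> finType) (E : forall n, {set {set V n}}),
    expander b d E ->
  forall c : R, 0 < c < 1 ->
  exists q2 : R, q1 < q2 < 1 /\
    (forall alpha : R, 0 < alpha < 1 ->
       exists N : nat, forall n : nat, (N <= n)%N ->
         exists p : R, is_crit (E n) c alpha p
           /\ (forall p' : R, is_crit (E n) c alpha p' -> p' = p)
           /\ q1 < p < q2) /\
    (forall (n : nat) (p : R), q2 <= p <= 1 ->
       1 - C1 * expR (- C2 * ((#|V n|)%:R / ln (#|V n|)%:R))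
         <= mu (giant (E n) c) p).
Proof.
pose q1 : R := (d.+1 ^ 3)%:R^-1.
have q1_0 : 0 < q1 by rewrite invr_gt0 ltr0n expn_gt0.
have q1_half : q1 <= 2^-1.
  by rewrite lef_pV2 ?posrE ?ltr0n ?expn_gt0 // ler_nat !expnS expn0; nia.
exists q1; split => // b b0; exists 1, (ln 2 ^+ 2).
split; first exact: ltr01.
split; first by rewrite exprn_gt0 // ln_gt0 //; lra.
move=> V E [graphE degE cheegerE largeV] c c01; have /andP[c0 c1] := c01.
have beta0 : 0 < b * ((1 - c) / 2) by rewrite mulr_gt0 // divr_gt0 //; lra.
have [K [K_ge /andP[q2_half q2_1]]] := exists_supercritical_level beta0.
exists (1 - 4^-1 ^+ K); split; first by rewrite q2_1 andbT; lra.
have super n p := mu_giant_supercritical (cheegerE n) b0 c01 K_ge (p := p).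
split=> [al /andP[al0 al1] | n p /(super n) mu_large]; last first.
  by apply: le_trans mu_large; rewrite mul1r lerB // half_pow_le_expR.
have [M1 sub] := mu_giant_subcritical_small hd c0 al0.
have [M2 half] : exists M, forall k, (M <= k)%N -> 2^-1 ^+ k < 1 - al.
  by apply: exists_half_pow_lt; lra.
have [N HN] := largeV (maxn M1 M2); exists N => n /HN; rewrite geq_max => /andP[n1 n2].
apply: exists_unique_crit (@giant_increasing _ _ _ c) (ltW q1_0) _ (ltW q2_1) _; first lra.
rewrite sub //=; apply: lt_le_trans (super n _ _); first by have := half _ n2; lra.
by rewrite lexx ltW.
Qed.
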